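(* Let $\nabla$ be a module connection on $M$. Then $(\mathsf K_\nabla,\mathsf H_\nabla)$ is a tangent category connection on $\mathsf q_M$.
   Context: Fix a commutative ring $R$, a commutative $R$-algebra $A$ and an $A$-module $M$. ''Algebra'' means commutative $R$-algebra and ''algebra map'' means $R$-algebra homomorphism. $\Omega(A)$ is the $A$-module of Kähler differentials of $A$ over $R$, with universal derivation $\mathsf d:A\to\Omega(A)$. A (module) connection on $M$ is an $R$-linear map $\nabla:M\to\Omega(A)\otimes_AM$ such that $\nabla(am)=a\nabla(m)+\mathsf d(a)\otimes_Am$ for all $a\in A$, $m\in M$. Tangent algebras: for an algebra $B$, $\mathsf T(B):=\mathrm{Sym}_B(\Omega(B))$, i.e. the $B$-algebra generated by symbols $\mathsf d(b)$ ($b\in B$) subject to $\mathsf d(b+b')=\mathsf d(b)+\mathsf d(b')$, $\mathsf d(bb')=b\,\mathsf d(b')+b'\,\mathsf d(b)$, $\mathsf d(r1)=0$ ($r\in R$). An algebra map out of $\mathsf T(B)$ is determined by its values on the generators $b$, $\mathsf d(b)$. Write $\mathsf T^2(B)=\mathsf T(\mathsf T(B))$ and denote the universal derivation $\mathsf T(B)\to\mathsf T^2(B)$ by $\mathsf d'$; so $\mathsf T^2(B)$ is generated over $B$ by $\mathsf d(b),\mathsf d'(b),\mathsf d'\mathsf d(b)$. For an algebra map $h:X\to Y$, $\mathsf T(h):\mathsf T(X)\to\mathsf T(Y)$ sends $x\mapsto h(x)$ and $\delta_X(x)\mapsto\delta_Y(h(x))$, where $\delta$ denotes the relevant universal derivation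 ($\mathsf d$ for $B\to\mathsf T(B)$, $\mathsf d'$ for $\mathsf T(B)\to\mathsf T^2(B)$). Algebra maps defined on generators $b\in B$: $\mathsf p_B:B\to\mathsf T(B)$ the inclusion; $0_B:\mathsf T(B)\to B$, $b\mapsto b$, $\mathsf d(b)\mapsto 0$; $\ell_B:\mathsf T^2(B)\to\mathsf T(B)$, $b\mapsto b$, $\mathsf d(b)\mapsto 0$, $\mathsf d'(b)\mapsto0$, $\mathsf d'\mathsf d(b)\mapsto\mathsf d(b)$; $\mathsf c_B:\mathsf T^2(B)\to\mathsf T^2(B)$, $b\mapsto b$, $\mathsf d(b)\mapsto\mathsf d'(b)$, $\mathsf d'(b)\mapsto\mathsf d(b)$, $\mathsf d'\mathsf d(b)\mapsto\mathsf d'\mathsf d(b)$. (These are, read in algebras, the structure maps of the Rosický tangent structure on affine schemes over $R$, i.e. on the opposite of the category of commutative $R$-algebras.) Differential bundle of $M$: $\mathsf S_A(M)$ is the symmetric $A$-algebra on $M$ (generated by $a\in A$, $m\in M$). Algebra maps: $\mathsf q_M:A\to\mathsf S_A(M)$ the inclusion; $\mathsf z_M:\mathsf S_A(M)\to A$, $a\mapsto a$, $m\mapsto 0$; $\lambda_M:\mathsf T(\mathsf S_A(M))\to\mathsf S_A(M)$, $a\mapsto a$, $m\mapsto0$, $\mathsf d(a)\mapsto 0$, $\mathsf d(m)\mapsto m$. Let $U:\mathsf T(A)\otimes_A\mathsf S_A(M)\to\mathsf T(\mathsf S_A(M))$ be the algebra map $w\otimes v\mapsto\mathsf T(\mathsf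 q_M)(w)\,v$ (we regard $\Omega(A)\otimes_AM\subseteq\mathsf T(A)\otimes_A\mathsf S_A(M)$). A horizontal connection on $\mathsf q_M$ is an algebra map $\mathsf H:\mathsf T(\mathsf S_A(M))\to\mathsf T(A)\otimes_A\mathsf S_A(M)$ such that (H1) $\mathsf H(\mathsf T(\mathsf q_M)(w))=w\otimes1$ for all $w\in\mathsf T(A)$; (H2) $\mathsf H(v)=1\otimes v$ for all $v\in\mathsf S_A(M)$; (H3) $(\ell_A\otimes0_{\mathsf S_A(M)})\circ\theta\circ\mathsf T(\mathsf H)=\mathsf H\circ\ell_{\mathsf S_A(M)}$; (H4) $(0_{\mathsf T(A)}\otimes\lambda_M)\circ\theta\circ\mathsf T(\mathsf H)=\mathsf H\circ\mathsf T(\lambda_M)\circ\mathsf c_{\mathsf S_A(M)}$. Here $\mathsf T^2(A)\otimes_{\mathsf T(A)}\mathsf T(\mathsf S_A(M))$ is formed via $\mathsf T(\mathsf p_A):\mathsf T(A)\to\mathsf T^2(A)$ ($a\mapsto a$, $\mathsf d(a)\mapsto\mathsf d'(a)$) and $\mathsf T(\mathsf q_M)$; $\theta:\mathsf T(\mathsf T(A)\otimes_A\mathsf S_A(M))\to\mathsf T^2(A)\otimes_{\mathsf T(A)}\mathsf T(\mathsf S_A(M))$ is the canonical isomorphism, $w\otimes v\mapsto w\otimes v$, $\mathsf d(w\otimes v)\mapsto\mathsf d'(w)\otimes v+w\otimes\mathsf d(v)$; the maps $\ell_A\otimes0_{\mathsf S_A(M)}$ and $0_{\mathsf T(A)}\otimes\lambda_M$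 into $\mathsf T(A)\otimes_A\mathsf S_A(M)$ are induced factorwise, where $0_{\mathsf T(A)}:\mathsf T^2(A)\to\mathsf T(A)$ sends $a\mapsto a$, $\mathsf d(a)\mapsto\mathsf d(a)$, $\mathsf d'(a)\mapsto0$, $\mathsf d'\mathsf d(a)\mapsto0$. A vertical connection on $\mathsf q_M$ is an algebra map $\mathsf K:\mathsf S_A(M)\to\mathsf T(\mathsf S_A(M))$ such that (K1) $\lambda_M\circ\mathsf K=\mathrm{id}$; (K2) $\mathsf K(a)=a$ for all $a\in A$; (K3) $\ell_{\mathsf S_A(M)}\circ\mathsf T(\mathsf K)=\mathsf K\circ\lambda_M$; (K4) $\mathsf T(\lambda_M)\circ\mathsf c_{\mathsf S_A(M)}\circ\mathsf T(\mathsf K)=\mathsf K\circ\lambda_M$. A (tangent category) connection on $\mathsf q_M$ is a pair $(\mathsf K,\mathsf H)$ of a vertical and a horizontal connection on $\mathsf q_M$ such that $\mathsf H\circ\mathsf K=\iota_1\circ\mathsf q_M\circ\mathsf z_M$ (where $\iota_1(v)=1\otimes v$), i.e. $\mathsf H(\mathsf K(m))=0$ for $m\in M$, and $\mathsf K(m)+U(\mathsf H(\mathsf d(m)))=\mathsf d(m)$ for all $m\in M$. Given a module connection $\nabla$ on $M$: $\mathsf H_\nabla:\mathsf T(\mathsf S_A(M))\to\mathsf T(A)\otimes_A\mathsf S_A(M)$ is the algebra map with $a\mapsto a\otimes1$, $m\mapsto 1\otimes m$, $\mathsf d(a)\mapsto\mathsf d(a)\otimes 1$, $\mathsf d(m)\mapsto\nabla(m)$;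 and $\mathsf K_\nabla:\mathsf S_A(M)\to\mathsf T(\mathsf S_A(M))$ is the algebra map with $a\mapsto a$, $m\mapsto\mathsf d(m)-U(\nabla(m))$ (i.e. if $\nabla(m)=\sum_i\mathsf d(a_i)\otimes m_i$ then $\mathsf K_\nabla(m)=\mathsf d(m)-\sum_im_i\,\mathsf d(a_i)$). *)

(* The constructions Sym_B(Omega(B)) (tangent algebra), Sym_A(M) and the tensor
   product of algebras are specified by their defining universal properties
   (presentation by generators and relations <-> initial algebra). *)
From HB Require Import structures.
From mathcomp Require Import all_boot all_algebra.

Set Implicit Arguments.
Unset Strict Implicit.
Unset Printing Implicit Defensive.

Import GRing.Theory.
Local Open Scope ring_scope.

Section TangentDefs.
Variable R : comPzRingType.

Definition is_derivation (B C : comAlgType R) (f : B -> C) (delta : B -> C) :=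
  [/\ forall x y, delta (x + y) = delta x + delta y,
      forall x y, delta (x * y) = f x * delta y + f y * delta x &
      forall r : R, delta (r%:A) = 0].

(* The tangent algebra T(B) = Sym_B(Omega(B)): the B-algebra generated by
   symbols d(b) subject to additivity, Leibniz and d(r1) = 0, i.e. the initial
   algebra under B equipped with such a derivation. *)
Record tangent_alg (B : comAlgType R) := TangentAlg {
  tan_carrier :> comAlgType R;
  tan_p : {lrmorphism B -> tan_carrier};
  tan_d : B -> tan_carrier;
  tan_d_der : is_derivation tan_p tan_d;
  tan_ex : forall (C : comAlgType R) (f : {lrmorphism B -> C}) (delta : B -> C),
    is_derivation f delta ->
    exists h : {lrmorphism tan_carrier -> C},
      (forall b, h (tan_p b) = f b) /\ (forall b, h (tan_d b) = delta b);
  tan_uniq : forall (C : comAlgType R) (h h' : {lrmorphism tan_carrier -> C}),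
    (forall b, h (tan_p b) = h' (tan_p b)) ->
    (forall b, h (tan_d b) = h' (tan_d b)) ->
    forall x, h x = h' x
}.

Record sym_alg (A : comAlgType R) (M : lmodType A) := SymAlg {
  sym_carrier :> comAlgType R;
  sym_q : {lrmorphism A -> sym_carrier};
  sym_j : M -> sym_carrier;
  sym_j_add : forall m m', sym_j (m + m') = sym_j m + sym_j m';
  sym_j_scale : forall (a : A) (m : M), sym_j (a *: m) = sym_q a * sym_j m;
  sym_ex : forall (C : comAlgType R) (f : {lrmorphism A -> C}) (g : M -> C),
    (forall m m', g (m + m') = g m + g m') ->
    (forall (a : A) (m : M), g (a *: m) = f a * g m) ->
    exists h : {lrmorphism sym_carrier -> C},
      (forall a, h (sym_q a) = f a) /\ (forall m, h (sym_j m) = g m);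
  sym_uniq : forall (C : comAlgType R) (h h' : {lrmorphism sym_carrier -> C}),
    (forall a, h (sym_q a) = h' (sym_q a)) ->
    (forall m, h (sym_j m) = h' (sym_j m)) ->
    forall x, h x = h' x
}.

(* Tensor product C1 (x)_B C2 of commutative algebras (pushout of
   f1 : B -> C1 and f2 : B -> C2); [po_i1 x] is x (x) 1, [po_i2 y] is 1 (x) y. *)
Record alg_pushout (B C1 C2 : comAlgType R)
    (f1 : {lrmorphism B -> C1}) (f2 : {lrmorphism B -> C2}) := AlgPushout {
  po_carrier :> comAlgType R;
  po_i1 : {lrmorphism C1 -> po_carrier};
  po_i2 : {lrmorphism C2 -> po_carrier};
  po_comm : forall b, po_i1 (f1 b) = po_i2 (f2 b);
  po_ex : forall (C : comAlgType R) (g1 : {lrmorphism C1 -> C})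
      (g2 : {lrmorphism C2 -> C}),
    (forall b, g1 (f1 b) = g2 (f2 b)) ->
    exists h : {lrmorphism po_carrier -> C},
      (forall x, h (po_i1 x) = g1 x) /\ (forall y, h (po_i2 y) = g2 y);
  po_uniq : forall (C : comAlgType R) (h h' : {lrmorphism po_carrier -> C}),
    (forall x, h (po_i1 x) = h' (po_i1 x)) ->
    (forall y, h (po_i2 y) = h' (po_i2 y)) ->
    forall z, h z = h' z
}.

End TangentDefs.

From HB Require Import structures.
From mathcomp Require Import all_boot all_algebra.

(* All maps involved are algebra maps out of algebras presented by generators
   (a and m for S_A(M); b and d b for T(B)), so every identity is checked on
   generators.  Derivations are determined by their values on generators as
   well: a derivation [delta] over [f] into [C] is the same thing as the algebra
   map [x |-> f x + delta x eps] into the dual numbers [C[eps]].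
   On generators everything is immediate except at [d m], where
   [K_nabla m = d m - U (nabla m)] and [nabla m] is a sum of terms
   [d a (x) m']: each structure map sends such a sum to the expected value. *)

Set Implicit Arguments.
Unset Strict Implicit.
Unset Printing Implicit Defensive.

Import GRing.Theory.
Local Open Scope ring_scope.

Section DualNumbers.
Variables (R : comPzRingType) (C : comAlgType R).

Record dual := Dual { dual_re : C; dual_eps : C }.

Definition pair_of_dual (x : dual) := (dual_re x, dual_eps x).
Definition dual_of_pair (x : C * C) := Dual x.1 x.2.
Lemma pair_of_dualK : cancel pair_of_dual dual_of_pair. Proof. by case. Qed.
HB.instance Definition _ := Choice.copy dual (can_type pair_of_dualK).

Definition dual_add x y := Dual (dual_re x + dual_re y) (dual_eps x + dual_eps y).
Definition dual_opp x := Dual (- dual_re x) (- dual_eps x).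

Lemma dual_addA : associative dual_add.
Proof. by move=> [a b] [c d] [e f]; rewrite /dual_add /= !addrA. Qed.
Lemma dual_addC : commutative dual_add.
Proof. by move=> [a b] [c d]; rewrite /dual_add /= addrC (addrC b). Qed.
Lemma dual_add0 : left_id (Dual 0 0) dual_add.
Proof. by move=> [a b]; rewrite /dual_add /= !add0r. Qed.
Lemma dual_addN : left_inverse (Dual 0 0) dual_opp dual_add.
Proof. by move=> [a b]; rewrite /dual_add /= !addNr. Qed.
HB.instance Definition _ :=
  GRing.isZmodule.Build dual dual_addA dual_addC dual_add0 dual_addN.

Definition dual_mul x y :=
  Dual (dual_re x * dual_re y) (dual_re x * dual_eps y + dual_eps x * dual_re y).

Lemma dual_mulA : associative dual_mul.
Proof.
move=> [a b] [c d] [e f]; rewrite /dual_mul /=; congr Dual; first by rewrite mulrA.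
by rewrite !mulrDr !mulrDl !mulrA addrA.
Qed.
Lemma dual_mulC : commutative dual_mul.
Proof. by move=> [a b] [c d]; rewrite /dual_mul /= mulrC addrC (mulrC a) (mulrC b). Qed.
Lemma dual_mul1 : left_id (Dual 1 0) dual_mul.
Proof. by move=> [a b]; rewrite /dual_mul /= !mul1r mul0r addr0. Qed.
Lemma dual_mulDl : left_distributive dual_mul dual_add.
Proof.
move=> [a b] [c d] [e f]; rewrite /dual_mul /dual_add /=.
by congr Dual; rewrite !mulrDl // addrACA.
Qed.
Lemma dual1_neq0 : Dual 1 0 != 0.
Proof. by apply/eqP => -[] /eqP; rewrite oner_eq0. Qed.
HB.instance Definition _ := GRing.Zmodule_isComNzRing.Build dual
  dual_mulA dual_mulC dual_mul1 dual_mulDl dual1_neq0.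

Definition dual_scale (r : R) x := Dual (r *: dual_re x) (r *: dual_eps x).

Lemma dual_scaleA a b v : dual_scale a (dual_scale b v) = dual_scale (a * b) v.
Proof. by rewrite /dual_scale /= !scalerA. Qed.
Lemma dual_scale1 : left_id 1 dual_scale.
Proof. by move=> [a b]; rewrite /dual_scale /= !scale1r. Qed.
Lemma dual_scaleDr : right_distributive dual_scale +%R.
Proof. by move=> r [a b] [c d]; rewrite /dual_scale /= !scalerDr. Qed.
Lemma dual_scaleDl v : {morph dual_scale^~ v : a b / a + b}.
Proof. by move=> a b; rewrite /dual_scale /= !scalerDl. Qed.
HB.instance Definition _ := GRing.Zmodule_isLmodule.Build R dual
  dual_scaleA dual_scale1 dual_scaleDr dual_scaleDl.

Lemma dual_scaleAl (a : R) (u v : dual) : a *: (u * v) = (a *: u) * v.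
Proof.
case: u v => [x y] [z w]; rewrite /GRing.scale /= /dual_scale /GRing.mul /= /dual_mul /=.
by rewrite -!scalerAl scalerDr.
Qed.
HB.instance Definition _ := GRing.Lmodule_isLalgebra.Build R dual dual_scaleAl.
HB.instance Definition _ := GRing.Lalgebra_isComAlgebra.Build R dual.

End DualNumbers.

Section Derivations.
Variables (R : comPzRingType) (X C : comAlgType R).
Variables (f : {lrmorphism X -> C}) (delta : X -> C).
Hypothesis delta_der : is_derivation f delta.

Lemma derD x y : delta (x + y) = delta x + delta y.
Proof. by case: delta_der. Qed.
Lemma derM x y : delta (x * y) = f x * delta y + f y * delta x.
Proof. by case: delta_der. Qed.

Lemma der0 : delta 0 = 0.
Proof. by apply: (addrI (delta 0)); rewrite -derD !addr0. Qed.
Lemma derB x y : delta (x - y) = delta x - delta y.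
Proof. by apply/eqP; rewrite eq_sym subr_eq -derD subrK. Qed.
Lemma der1 : delta 1 = 0.
Proof. by case: delta_der => _ _ /(_ 1); rewrite scale1r. Qed.
Lemma derZ r x : delta (r *: x) = r *: delta x.
Proof.
case: delta_der => _ _ der_alg.
by rewrite -mulr_algl derM der_alg mulr0 addr0 rmorph_alg mulr_algl.
Qed.
Lemma der_sum (I : Type) (s : seq I) (F : I -> X) :
  delta (\sum_(i <- s) F i) = \sum_(i <- s) delta (F i).
Proof. by elim: s => [|i s IHs]; rewrite ?big_nil ?der0 // !big_cons derD IHs. Qed.

Definition dual_of_der (x : X) : dual C := Dual (f x) (delta x).

Lemma dual_of_der_linear : linear dual_of_der.
Proof. by move=> r x y; rewrite /dual_of_der derD derZ linearP. Qed.
Lemma dual_of_der_multiplicative : multiplicative dual_of_der.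
Proof.
split=> [x y|]; last by rewrite /dual_of_der der1 rmorph1.
by rewrite /dual_of_der derM rmorphM /GRing.mul /= /dual_mul /= (mulrC (delta x)).
Qed.
HB.instance Definition _ :=
  GRing.isLinear.Build R X (dual C) *:%R dual_of_der dual_of_der_linear.
HB.instance Definition _ :=
  GRing.isMultiplicative.Build X (dual C) dual_of_der dual_of_der_multiplicative.

Definition der_lrmorphism : {lrmorphism X -> dual C} := dual_of_der.

End Derivations.

Lemma der_comp (R : comPzRingType) (X Y C : comAlgType R) (f : X -> Y)
    (delta : X -> Y) (g : {lrmorphism Y -> C}) (f' : X -> C) :
  is_derivation f delta -> g \o f =1 f' -> is_derivation f' (g \o delta).
Proof.
move=> [derD derM der_alg] eq_f; split=> [x y|x y|r] /=.
- by rewrite derD rmorphD.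
- by rewrite derM rmorphD !rmorphM -!eq_f.
- by rewrite der_alg rmorph0.
Qed.

(* Restatements of the ring morphism laws that keep the [{lrmorphism}]
   coercion: rewriting with [rmorphM] and friends turns it into the
   [{rmorphism}] one, after which the hypotheses on the structure maps no
   longer match syntactically. *)
Section LRMorphismLaws.
Variables (R : comPzRingType) (X Y : comAlgType R) (f : {lrmorphism X -> Y}).

Lemma lrmorph0 : f 0 = 0. Proof. exact: rmorph0. Qed.
Lemma lrmorph1 : f 1 = 1. Proof. exact: rmorph1. Qed.
Lemma lrmorphD x y : f (x + y) = f x + f y. Proof. exact: rmorphD. Qed.
Lemma lrmorphB x y : f (x - y) = f x - f y. Proof. exact: rmorphB. Qed.
Lemma lrmorphM x y : f (x * y) = f x * f y. Proof. exact: rmorphM. Qed.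
Lemma lrmorph_sum (I : Type) (s : seq I) (F : I -> X) :
  f (\sum_(i <- s) F i) = \sum_(i <- s) f (F i).
Proof. exact: rmorph_sum. Qed.

End LRMorphismLaws.

Section Generators.
Variable R : comPzRingType.

Definition generates (X : comAlgType R) (G : X -> Prop) :=
  forall (C : comAlgType R) (h h' : {lrmorphism X -> C}),
    (forall x, G x -> h x = h' x) -> h =1 h'.

Lemma der_eq_on_generators (X C : comAlgType R) (G : X -> Prop)
    (f : {lrmorphism X -> C}) (delta delta' : X -> C) :
  generates G -> is_derivation f delta -> is_derivation f delta' ->
  (forall x, G x -> delta x = delta' x) -> delta =1 delta'.
Proof.
move=> genG der_delta der_delta' eq_G x.
suff /(_ x) [] : der_lrmorphism der_delta =1 der_lrmorphism der_delta' by [].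
by apply: genG => y Gy; rewrite /= /dual_of_der eq_G.
Qed.

Lemma sym_generates (A : comAlgType R) (M : lmodType A) (S : sym_alg M) :
  generates (fun v : S => (exists a, v = sym_q S a) \/ (exists m, v = sym_j S m)).
Proof. by move=> C h h' eq_G; apply: sym_uniq => [a|m]; apply: eq_G; eauto. Qed.

Lemma tangent_generates (X : comAlgType R) (G : X -> Prop) (T : tangent_alg X) :
  generates G ->
  generates (fun y : T => exists x, G x /\ (y = tan_p T x \/ y = tan_d T x)).
Proof.
move=> genG C h h' eq_G.
have eq_p : h' \o tan_p T =1 h \o tan_p T.
  by apply: genG => x Gx /=; symmetry; apply: eq_G; eauto.
apply: tan_uniq => [x|]; first exact/esym/eq_p.
apply: (der_eq_on_generators (f := h \o tan_p T) genG).
- exact: (der_comp (g := h) (tan_d_der T) (frefl _)).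
- exact: (der_comp (g := h') (tan_d_der T) eq_p).
- by move=> x Gx /=; apply: eq_G; eauto.
Qed.

End Generators.

Section ConnectionOfNabla.
Variables (R : comPzRingType) (A : comAlgType R) (M : lmodType A) (S : sym_alg M).
Variables (TA : tangent_alg A) (TTA : tangent_alg TA).
Variables (TS : tangent_alg S) (TTS : tangent_alg TS).
Variables (P : alg_pushout (tan_p TA) (sym_q S)) (TP : tangent_alg P).

Local Notation q := (sym_q S).
Local Notation j := (sym_j S).
Local Notation pS := (tan_p TS).
Local Notation dS := (tan_d TS).
Local Notation pTS := (tan_p TTS).
Local Notation dTS := (tan_d TTS).
Local Notation i1 := (po_i1 P).
Local Notation i2 := (po_i2 P).

Variables (TpA : {lrmorphism TA -> TTA}) (TqM : {lrmorphism TA -> TS}).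
Hypothesis TqM_p : forall a, TqM (tan_p TA a) = pS (q a).
Hypothesis TqM_d : forall a, TqM (tan_d TA a) = dS (q a).
Variable Q : alg_pushout TpA TqM.

Variable zM : {lrmorphism S -> A}.
Hypothesis zM_q : forall a, zM (q a) = a.
Hypothesis zM_j : forall m, zM (j m) = 0.

Variable lamM : {lrmorphism TS -> S}.
Hypothesis lamM_pq : forall a, lamM (pS (q a)) = q a.
Hypothesis lamM_pj : forall m, lamM (pS (j m)) = 0.
Hypothesis lamM_dq : forall a, lamM (dS (q a)) = 0.
Hypothesis lamM_dj : forall m, lamM (dS (j m)) = j m.

Variable zeroS : {lrmorphism TS -> S}.
Hypothesis zeroS_p : forall v, zeroS (pS v) = v.
Hypothesis zeroS_d : forall v, zeroS (dS v) = 0.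

Variable zeroTA : {lrmorphism TTA -> TA}.
Hypothesis zeroTA_pp : forall a, zeroTA (tan_p TTA (tan_p TA a)) = tan_p TA a.
Hypothesis zeroTA_pd : forall a, zeroTA (tan_p TTA (tan_d TA a)) = tan_d TA a.
Hypothesis zeroTA_dp : forall a, zeroTA (tan_d TTA (tan_p TA a)) = 0.
Hypothesis zeroTA_dd : forall a, zeroTA (tan_d TTA (tan_d TA a)) = 0.

Variable ellA : {lrmorphism TTA -> TA}.
Hypothesis ellA_pp : forall a, ellA (tan_p TTA (tan_p TA a)) = tan_p TA a.
Hypothesis ellA_pd : forall a, ellA (tan_p TTA (tan_d TA a)) = 0.
Hypothesis ellA_dp : forall a, ellA (tan_d TTA (tan_p TA a)) = 0.
Hypothesis ellA_dd : forall a, ellA (tan_d TTA (tan_d TA a)) = tan_d TA a.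

Variable ellS : {lrmorphism TTS -> TS}.
Hypothesis ellS_pp : forall v, ellS (pTS (pS v)) = pS v.
Hypothesis ellS_pd : forall v, ellS (pTS (dS v)) = 0.
Hypothesis ellS_dp : forall v, ellS (dTS (pS v)) = 0.
Hypothesis ellS_dd : forall v, ellS (dTS (dS v)) = dS v.

Variable cS : {lrmorphism TTS -> TTS}.
Hypothesis cS_pp : forall v, cS (pTS (pS v)) = pTS (pS v).
Hypothesis cS_pd : forall v, cS (pTS (dS v)) = dTS (pS v).
Hypothesis cS_dp : forall v, cS (dTS (pS v)) = pTS (dS v).
Hypothesis cS_dd : forall v, cS (dTS (dS v)) = dTS (dS v).

Variable TlamM : {lrmorphism TTS -> TS}.
Hypothesis TlamM_p : forall x, TlamM (pTS x) = pS (lamM x).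
Hypothesis TlamM_d : forall x, TlamM (dTS x) = dS (lamM x).

Variable U : {lrmorphism P -> TS}.
Hypothesis U_1 : forall w, U (i1 w) = TqM w.
Hypothesis U_2 : forall v, U (i2 v) = pS v.

Variable ell0 : {lrmorphism Q -> P}.
Hypothesis ell0_1 : forall x, ell0 (po_i1 Q x) = i1 (ellA x).
Hypothesis ell0_2 : forall y, ell0 (po_i2 Q y) = i2 (zeroS y).

Variable zlam : {lrmorphism Q -> P}.
Hypothesis zlam_1 : forall x, zlam (po_i1 Q x) = i1 (zeroTA x).
Hypothesis zlam_2 : forall y, zlam (po_i2 Q y) = i2 (lamM y).

Variable theta : {lrmorphism TP -> Q}.
Hypothesis theta_p : forall w v,
  theta (tan_p TP (i1 w * i2 v)) = po_i1 Q (tan_p TTA w) * po_i2 Q (pS v).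
Hypothesis theta_d : forall w v,
  theta (tan_d TP (i1 w * i2 v)) = po_i1 Q (tan_d TTA w) * po_i2 Q (pS v)
                                   + po_i1 Q (tan_p TTA w) * po_i2 Q (dS v).

Variable nabla : M -> P.
Hypothesis nabla_range : forall m, exists s : seq (A * M),
  nabla m = \sum_(x <- s) i1 (tan_d TA x.1) * i2 (j x.2).

Variable H : {lrmorphism TS -> P}.
Hypothesis H_pq : forall a, H (pS (q a)) = i1 (tan_p TA a).
Hypothesis H_pj : forall m, H (pS (j m)) = i2 (j m).
Hypothesis H_dq : forall a, H (dS (q a)) = i1 (tan_d TA a).
Hypothesis H_dj : forall m, H (dS (j m)) = nabla m.

Variable K : {lrmorphism S -> TS}.
Hypothesis K_q : forall a, K (q a) = pS (q a).
Hypothesis K_j : forall m, K (j m) = dS (j m) - U (nabla m).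

Variable TH : {lrmorphism TTS -> TP}.
Hypothesis TH_p : forall x, TH (pTS x) = tan_p TP (H x).
Hypothesis TH_d : forall x, TH (dTS x) = tan_d TP (H x).

Variable TK : {lrmorphism TS -> TTS}.
Hypothesis TK_p : forall v, TK (pS v) = pTS (K v).
Hypothesis TK_d : forall v, TK (dS v) = dTS (K v).

Let genS := @sym_generates R A M S.
Let genTS := @tangent_generates R S _ TS genS.
Let genTTS := @tangent_generates R TS _ TTS genTS.

Lemma H_TqM : forall w, H (TqM w) = i1 w.
Proof.
apply: (@tan_uniq _ _ TA _ (H \o TqM) i1) => a /=.
  by rewrite TqM_p H_pq.
by rewrite TqM_d H_dq.
Qed.

Lemma H_p : forall v, H (pS v) = i2 v.
Proof.
apply: (@genS _ (H \o pS) i2) => _ [[a ->]|[m ->]] /=; last exact: H_pj.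
by rewrite H_pq -po_comm.
Qed.

Lemma H_U : forall z, H (U z) = z.
Proof.
apply: (@po_uniq _ _ _ _ _ _ P _ (H \o U) idfun) => x /=.
  by rewrite U_1 H_TqM.
by rewrite U_2 H_p.
Qed.

Lemma U_nabla_sum m : exists s : seq (A * M),
  U (nabla m) = \sum_(x <- s) dS (q x.1) * pS (j x.2).
Proof.
have [s ->] := nabla_range m; exists s; rewrite lrmorph_sum.
by apply: eq_bigr => x _; rewrite lrmorphM U_1 TqM_d U_2.
Qed.

Lemma lamM_U_nabla m : lamM (U (nabla m)) = 0.
Proof.
have [s ->] := U_nabla_sum m; rewrite lrmorph_sum big1 // => x _.
by rewrite lrmorphM lamM_dq mul0r.
Qed.

Lemma lamM_K : forall v, lamM (K v) = v.
Proof.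
apply: (@genS _ (lamM \o K) idfun) => _ [[a ->]|[m ->]] /=.
  by rewrite K_q lamM_pq.
by rewrite K_j lrmorphB lamM_dj lamM_U_nabla subr0.
Qed.

Lemma ellS_TK : forall x, ellS (TK x) = K (lamM x).
Proof.
have der_dTS := tan_d_der TTS.
apply: (@genTS _ (ellS \o TK) (K \o lamM)) => _ [v [[[a ->]|[m ->]] [->|->]]] /=.
- by rewrite TK_p K_q ellS_pp lamM_pq K_q.
- by rewrite TK_d K_q ellS_dp lamM_dq lrmorph0.
- rewrite TK_p K_j lamM_pj; have [s ->] := U_nabla_sum m.
  rewrite !lrmorphB !lrmorph_sum ellS_pd lrmorph0 big1 ?subrr // => x _.
  by rewrite !lrmorphM ellS_pd mul0r.
- rewrite TK_d K_j lamM_dj K_j; have [s ->] := U_nabla_sum m.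
  rewrite (derB der_dTS) !lrmorphB (der_sum der_dTS) ellS_dd.
  congr (_ - _); rewrite !lrmorph_sum; apply: eq_bigr => x _.
  rewrite (derM der_dTS) lrmorphD !lrmorphM ellS_pd ellS_dd ellS_pp.
  by rewrite mul0r add0r mulrC.
Qed.

Lemma TlamM_cS_TK : forall x, TlamM (cS (TK x)) = K (lamM x).
Proof.
have der_dS := tan_d_der TS; have der_dTS := tan_d_der TTS.
apply: (@genTS _ (TlamM \o cS \o TK) (K \o lamM)) => _ [v [[[a ->]|[m ->]] [->|->]]] /=.
- by rewrite TK_p K_q cS_pp TlamM_p lamM_pq K_q.
- by rewrite TK_d K_q cS_dp TlamM_p lamM_dq !lrmorph0.
- rewrite TK_p K_j lamM_pj; have [s ->] := U_nabla_sum m.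
  rewrite !lrmorphB !lrmorph_sum cS_pd TlamM_d lamM_pj (der0 der_dS).
  rewrite lrmorph0 big1 ?subrr // => x _.
  by rewrite !lrmorphM cS_pd cS_pp TlamM_d TlamM_p lamM_pj lrmorph0 mulr0.
- rewrite TK_d K_j lamM_dj K_j; have [s ->] := U_nabla_sum m.
  rewrite (derB der_dTS) !lrmorphB cS_dd TlamM_d lamM_dj.
  congr (_ - _); rewrite (der_sum der_dTS) !lrmorph_sum; apply: eq_bigr => x _.
  rewrite (derM der_dTS) !lrmorphD !lrmorphM cS_pd cS_dp cS_pp cS_dd !TlamM_d !TlamM_p.
  by rewrite lamM_pq lamM_dj lamM_pj lamM_dq (der0 der_dS) mulr0 addr0.
Qed.

Lemma K_nabla_vertical :
  [/\ forall v, lamM (K v) = v,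
      forall a, K (q a) = pS (q a),
      forall x, ellS (TK x) = K (lamM x) &
      forall x, TlamM (cS (TK x)) = K (lamM x)].
Proof. by split; [exact: lamM_K | exact: K_q | exact: ellS_TK | exact: TlamM_cS_TK]. Qed.

Lemma theta_p1 w : theta (tan_p TP (i1 w)) = po_i1 Q (tan_p TTA w).
Proof. by have := theta_p w 1; rewrite !lrmorph1 !mulr1. Qed.

Lemma theta_p2 v : theta (tan_p TP (i2 v)) = po_i2 Q (pS v).
Proof. by have := theta_p 1 v; rewrite !lrmorph1 !mul1r. Qed.

Lemma theta_d1 w : theta (tan_d TP (i1 w)) = po_i1 Q (tan_d TTA w).
Proof.
have := theta_d w 1; rewrite !lrmorph1 !mulr1 (der1 (tan_d_der TS)) lrmorph0.
by rewrite mulr0 addr0.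
Qed.

Lemma theta_d2 v : theta (tan_d TP (i2 v)) = po_i2 Q (dS v).
Proof.
have := theta_d 1 v; rewrite !lrmorph1 !mul1r (der1 (tan_d_der TTA)) lrmorph0.
by rewrite mul0r add0r.
Qed.

Lemma ell0_theta_TH : forall x, ell0 (theta (TH x)) = H (ellS x).
Proof.
apply: (@genTTS _ (ell0 \o theta \o TH) (H \o ellS))
  => _ [y [[v [[[a ->]|[m ->]] [->|->]]] [->|->]]] /=.
- by rewrite TH_p H_pq theta_p1 ell0_1 ellA_pp ellS_pp H_pq.
- by rewrite TH_d H_pq theta_d1 ell0_1 ellA_dp !lrmorph0 ellS_dp lrmorph0.
- by rewrite TH_p H_dq theta_p1 ell0_1 ellA_pd !lrmorph0 ellS_pd lrmorph0.
- by rewrite TH_d H_dq theta_d1 ell0_1 ellA_dd ellS_dd H_dq.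
- by rewrite TH_p H_pj theta_p2 ell0_2 zeroS_p ellS_pp H_pj.
- by rewrite TH_d H_pj theta_d2 ell0_2 zeroS_d !lrmorph0 ellS_dp lrmorph0.
- rewrite TH_p H_dj ellS_pd lrmorph0; have [s ->] := nabla_range m.
  rewrite !lrmorph_sum big1 // => x _.
  by rewrite theta_p lrmorphM ell0_1 ellA_pd lrmorph0 mul0r.
- rewrite TH_d H_dj ellS_dd H_dj; have [s ->] := nabla_range m.
  rewrite (der_sum (tan_d_der TP)) !lrmorph_sum; apply: eq_bigr => x _.
  rewrite theta_d lrmorphD !lrmorphM !ell0_1 !ell0_2 ellA_dd ellA_pd zeroS_p zeroS_d.
  by rewrite lrmorph0 mul0r addr0.
Qed.

Lemma zlam_theta_TH : forall x, zlam (theta (TH x)) = H (TlamM (cS x)).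
Proof.
have der_dS := tan_d_der TS.
apply: (@genTTS _ (zlam \o theta \o TH) (H \o TlamM \o cS))
  => _ [y [[v [[[a ->]|[m ->]] [->|->]]] [->|->]]] /=.
- by rewrite TH_p H_pq theta_p1 zlam_1 zeroTA_pp cS_pp TlamM_p lamM_pq H_pq.
- by rewrite TH_d H_pq theta_d1 zlam_1 zeroTA_dp cS_dp TlamM_p lamM_dq !lrmorph0.
- by rewrite TH_p H_dq theta_p1 zlam_1 zeroTA_pd cS_pd TlamM_d lamM_pq H_dq.
- rewrite TH_d H_dq theta_d1 zlam_1 zeroTA_dd cS_dd TlamM_d lamM_dq.
  by rewrite (der0 der_dS) !lrmorph0.
- by rewrite TH_p H_pj theta_p2 zlam_2 cS_pp TlamM_p !lamM_pj !lrmorph0.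
- by rewrite TH_d H_pj theta_d2 zlam_2 cS_dp TlamM_p !lamM_dj H_pj.
- rewrite TH_p H_dj cS_pd TlamM_d lamM_pj (der0 der_dS) lrmorph0.
  have [s ->] := nabla_range m; rewrite !lrmorph_sum big1 // => x _.
  by rewrite theta_p lrmorphM zlam_1 zlam_2 lamM_pj !lrmorph0 mulr0.
- rewrite TH_d H_dj cS_dd TlamM_d lamM_dj H_dj; have [s ->] := nabla_range m.
  rewrite (der_sum (tan_d_der TP)) !lrmorph_sum; apply: eq_bigr => x _.
  rewrite theta_d lrmorphD !lrmorphM !zlam_1 !zlam_2 zeroTA_dd zeroTA_pd.
  by rewrite lamM_pj lamM_dj lrmorph0 mul0r add0r.
Qed.

Lemma H_nabla_horizontal :
  [/\ forall w, H (TqM w) = i1 w,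
      forall v, H (pS v) = i2 v,
      forall x, ell0 (theta (TH x)) = H (ellS x) &
      forall x, zlam (theta (TH x)) = H (TlamM (cS x))].
Proof.
by split; [exact: H_TqM | exact: H_p | exact: ell0_theta_TH | exact: zlam_theta_TH].
Qed.

Lemma H_K : forall v, H (K v) = i2 (q (zM v)).
Proof.
apply: (@genS _ (H \o K) (i2 \o q \o zM)) => _ [[a ->]|[m ->]] /=.
  by rewrite K_q H_pq zM_q po_comm.
by rewrite K_j lrmorphB H_U H_dj subrr zM_j !lrmorph0.
Qed.

End ConnectionOfNabla.

Theorem mainTheorem4
  (R : comPzRingType) (A : comAlgType R) (M : lmodType A)
  (S : sym_alg M)
  (TA : tangent_alg A) (TTA : tangent_alg TA)
  (TS : tangent_alg S) (TTS : tangent_alg TS)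
  (P : alg_pushout (tan_p TA) (sym_q S))
  (TP : tangent_alg P)
  (* T(p_A) : T(A) -> T^2(A) *)
  (TpA : {lrmorphism TA -> TTA})
  (TpA_p : forall a, TpA (tan_p TA a) = tan_p TTA (tan_p TA a))
  (TpA_d : forall a, TpA (tan_d TA a) = tan_d TTA (tan_p TA a))
  (* T(q_M) : T(A) -> T(S_A(M)) *)
  (TqM : {lrmorphism TA -> TS})
  (TqM_p : forall a, TqM (tan_p TA a) = tan_p TS (sym_q S a))
  (TqM_d : forall a, TqM (tan_d TA a) = tan_d TS (sym_q S a))
  (* Q = T^2(A) (x)_{T(A)} T(S_A(M)) *)
  (Q : alg_pushout TpA TqM)
  (* z_M : S_A(M) -> A *)
  (zM : {lrmorphism S -> A})
  (zM_q : forall a, zM (sym_q S a) = a)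
  (zM_j : forall m, zM (sym_j S m) = 0)
  (* lambda_M : T(S_A(M)) -> S_A(M) *)
  (lamM : {lrmorphism TS -> S})
  (lamM_pq : forall a, lamM (tan_p TS (sym_q S a)) = sym_q S a)
  (lamM_pj : forall m, lamM (tan_p TS (sym_j S m)) = 0)
  (lamM_dq : forall a, lamM (tan_d TS (sym_q S a)) = 0)
  (lamM_dj : forall m, lamM (tan_d TS (sym_j S m)) = sym_j S m)
  (* 0_{S_A(M)} : T(S_A(M)) -> S_A(M) *)
  (zeroS : {lrmorphism TS -> S})
  (zeroS_p : forall v, zeroS (tan_p TS v) = v)
  (zeroS_d : forall v, zeroS (tan_d TS v) = 0)
  (* 0_{T(A)} : T^2(A) -> T(A) *)
  (zeroTA : {lrmorphism TTA -> TA})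
  (zeroTA_pp : forall a, zeroTA (tan_p TTA (tan_p TA a)) = tan_p TA a)
  (zeroTA_pd : forall a, zeroTA (tan_p TTA (tan_d TA a)) = tan_d TA a)
  (zeroTA_dp : forall a, zeroTA (tan_d TTA (tan_p TA a)) = 0)
  (zeroTA_dd : forall a, zeroTA (tan_d TTA (tan_d TA a)) = 0)
  (* l_A : T^2(A) -> T(A) *)
  (ellA : {lrmorphism TTA -> TA})
  (ellA_pp : forall a, ellA (tan_p TTA (tan_p TA a)) = tan_p TA a)
  (ellA_pd : forall a, ellA (tan_p TTA (tan_d TA a)) = 0)
  (ellA_dp : forall a, ellA (tan_d TTA (tan_p TA a)) = 0)
  (ellA_dd : forall a, ellA (tan_d TTA (tan_d TA a)) = tan_d TA a)
  (* l_{S_A(M)} : T^2(S_A(M)) -> T(S_A(M)) *)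
  (ellS : {lrmorphism TTS -> TS})
  (ellS_pp : forall v, ellS (tan_p TTS (tan_p TS v)) = tan_p TS v)
  (ellS_pd : forall v, ellS (tan_p TTS (tan_d TS v)) = 0)
  (ellS_dp : forall v, ellS (tan_d TTS (tan_p TS v)) = 0)
  (ellS_dd : forall v, ellS (tan_d TTS (tan_d TS v)) = tan_d TS v)
  (* c_{S_A(M)} : T^2(S_A(M)) -> T^2(S_A(M)) *)
  (cS : {lrmorphism TTS -> TTS})
  (cS_pp : forall v, cS (tan_p TTS (tan_p TS v)) = tan_p TTS (tan_p TS v))
  (cS_pd : forall v, cS (tan_p TTS (tan_d TS v)) = tan_d TTS (tan_p TS v))
  (cS_dp : forall v, cS (tan_d TTS (tan_p TS v)) = tan_p TTS (tan_d TS v))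
  (cS_dd : forall v, cS (tan_d TTS (tan_d TS v)) = tan_d TTS (tan_d TS v))
  (* T(lambda_M) : T^2(S_A(M)) -> T(S_A(M)) *)
  (TlamM : {lrmorphism TTS -> TS})
  (TlamM_p : forall x, TlamM (tan_p TTS x) = tan_p TS (lamM x))
  (TlamM_d : forall x, TlamM (tan_d TTS x) = tan_d TS (lamM x))
  (* U : T(A) (x)_A S_A(M) -> T(S_A(M)),  w (x) v |-> T(q_M)(w) v *)
  (U : {lrmorphism P -> TS})
  (U_1 : forall w, U (po_i1 P w) = TqM w)
  (U_2 : forall v, U (po_i2 P v) = tan_p TS v)
  (* l_A (x) 0_{S_A(M)} : Q -> P *)
  (ell0 : {lrmorphism Q -> P})
  (ell0_1 : forall x, ell0 (po_i1 Q x) = po_i1 P (ellA x))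
  (ell0_2 : forall y, ell0 (po_i2 Q y) = po_i2 P (zeroS y))
  (* 0_{T(A)} (x) lambda_M : Q -> P *)
  (zlam : {lrmorphism Q -> P})
  (zlam_1 : forall x, zlam (po_i1 Q x) = po_i1 P (zeroTA x))
  (zlam_2 : forall y, zlam (po_i2 Q y) = po_i2 P (lamM y))
  (* theta : T(T(A) (x)_A S_A(M)) -> T^2(A) (x)_{T(A)} T(S_A(M)) *)
  (theta : {lrmorphism TP -> Q})
  (theta_p : forall w v, theta (tan_p TP (po_i1 P w * po_i2 P v))
                         = po_i1 Q (tan_p TTA w) * po_i2 Q (tan_p TS v))
  (theta_d : forall w v, theta (tan_d TP (po_i1 P w * po_i2 P v))
                         = po_i1 Q (tan_d TTA w) * po_i2 Q (tan_p TS v)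
                           + po_i1 Q (tan_p TTA w) * po_i2 Q (tan_d TS v))
  (* a module connection nabla : M -> Omega(A) (x)_A M  (in P) *)
  (nabla : M -> P)
  (nabla_range : forall m, exists s : seq (A * M),
      nabla m = \sum_(x <- s) po_i1 P (tan_d TA x.1) * po_i2 P (sym_j S x.2))
  (nabla_add : forall m m', nabla (m + m') = nabla m + nabla m')
  (nabla_scale : forall (r : R) (m : M), nabla ((r%:A : A) *: m) = r *: nabla m)
  (nabla_leibniz : forall (a : A) (m : M),
      nabla (a *: m) = po_i1 P (tan_p TA a) * nabla m
                       + po_i1 P (tan_d TA a) * po_i2 P (sym_j S m))
  (* H_nabla : T(S_A(M)) -> T(A) (x)_A S_A(M) *)
  (H : {lrmorphism TS -> P})
  (H_pq : forall a, H (tan_p TS (sym_q S a)) = po_i1 P (tan_p TA a))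
  (H_pj : forall m, H (tan_p TS (sym_j S m)) = po_i2 P (sym_j S m))
  (H_dq : forall a, H (tan_d TS (sym_q S a)) = po_i1 P (tan_d TA a))
  (H_dj : forall m, H (tan_d TS (sym_j S m)) = nabla m)
  (* K_nabla : S_A(M) -> T(S_A(M)) *)
  (K : {lrmorphism S -> TS})
  (K_q : forall a, K (sym_q S a) = tan_p TS (sym_q S a))
  (K_j : forall m, K (sym_j S m) = tan_d TS (sym_j S m) - U (nabla m))
  (* T(H_nabla) : T^2(S_A(M)) -> T(T(A) (x)_A S_A(M)) *)
  (TH : {lrmorphism TTS -> TP})
  (TH_p : forall x, TH (tan_p TTS x) = tan_p TP (H x))
  (TH_d : forall x, TH (tan_d TTS x) = tan_d TP (H x))
  (* T(K_nabla) : T(S_A(M)) -> T^2(S_A(M)) *)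
  (TK : {lrmorphism TS -> TTS})
  (TK_p : forall v, TK (tan_p TS v) = tan_p TTS (K v))
  (TK_d : forall v, TK (tan_d TS v) = tan_d TTS (K v)) :
  (* K_nabla is a vertical connection on q_M *)
  [/\ forall v, lamM (K v) = v,
      forall a, K (sym_q S a) = tan_p TS (sym_q S a),
      forall x, ellS (TK x) = K (lamM x) &
      forall x, TlamM (cS (TK x)) = K (lamM x)]
  /\
  (* H_nabla is a horizontal connection on q_M *)
  [/\ forall w, H (TqM w) = po_i1 P w,
      forall v, H (tan_p TS v) = po_i2 P v,
      forall x, ell0 (theta (TH x)) = H (ellS x) &
      forall x, zlam (theta (TH x)) = H (TlamM (cS x))]
  /\
  (* compatibility: H o K = iota_1 o q_M o z_M, and K(m) + U(H(d m)) = d m *)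
  (forall v, H (K v) = po_i2 P (sym_q S (zM v)))
  /\
  (forall m, K (sym_j S m) + U (H (tan_d TS (sym_j S m))) = tan_d TS (sym_j S m)).
Proof.
intros; split; first by eauto using K_nabla_vertical.
split; first by eauto using H_nabla_horizontal.
split; first by eauto using H_K.
by move=> m; rewrite K_j H_dj subrK.
Qed.
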